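(* Let $p$ be an odd prime and $\lambda=(\lambda_1,\dots,\lambda_r)$ a BG-partition, and let $k=k(\lambda)$. Then the partition $\mu=(\lambda_1,\lambda_2,\dots,\lambda_k)$ is $p$-regular.
   Context: For a partition $\lambda$ (weakly decreasing sequence of positive integers), $\lambda'$ is its conjugate and $\lambda$ is self-conjugate if $\lambda=\lambda'$. $k(\lambda)=\max\{i:\lambda_i\ge i\}$. The hook length at $(i,j)$ is $h_{ij}=\lambda_i+\lambda'_j-i-j+1$. A BG-partition is a self-conjugate partition with $p\nmid h_{ii}$ for all $1\le i\le k(\lambda)$. A partition is $p$-regular if no nonzero part appears $p$ or more times. *)

From mathcomp Require Import all_boot.
Set Implicit Arguments. Unset Strict Implicit. Unset Printing Implicit Defensive.

(* Parts are 1-indexed: part s i = lambda_i = nth 0 s (i-1), and lambda_i = 0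
   for i > size s (and by convention also for i = 0, which is never used). *)
Definition is_partition (s : seq nat) : bool :=
  sorted geq s && all (fun x => 0 < x) s.

Definition part (s : seq nat) (i : nat) : nat := nth 0 s i.-1.

Definition conj_part (s : seq nat) (j : nat) : nat := count (fun x => j <= x) s.

Definition conjugate (s : seq nat) : seq nat :=
  mkseq (fun j => conj_part s j.+1) (head 0 s).

Definition self_conjugate (s : seq nat) : bool := conjugate s == s.

(* k(lambda) = max { i >= 1 : lambda_i >= i } (0 if the set is empty;
   any such i satisfies i <= size s). *)
Definition kpart (s : seq nat) : nat :=
  \max_(i < size s | i.+1 <= part s i.+1) i.+1.

Definition hook (s : seq nat) (i j : nat) : nat :=
  part s i + conj_part s j + 1 - i - j.

Definition BG_partition (p : nat) (s : seq nat) : Prop :=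
  is_partition s /\ self_conjugate s /\
  forall i, 1 <= i <= kpart s -> ~~ (p %| hook s i i).

Definition p_regular (p : nat) (s : seq nat) : Prop :=
  forall x, 0 < x -> count_mem x s < p.

From mathcomp Require Import all_boot.
From mathcomp Require Import zify.

Set Implicit Arguments.
Unset Strict Implicit.
Unset Printing Implicit Defensive.

(* For a self-conjugate partition the diagonal hooks are h_ii = 2 (lambda_i - i) + 1.
   If a value x occurred p times among lambda_1, ..., lambda_k, sortedness puts these
   occurrences at p consecutive rows a+1, ..., a+p <= k, where lambda_i = x >= i; their
   diagonal hooks are then p consecutive odd numbers, and one of them is divisible by
   the odd prime p. *)

Section SortedBlock.

Variables (T : eqType) (leT : rel T).
Hypotheses (leT_tr : transitive leT) (leT_anti : antisymmetric leT).

Lemma nth_index_count_mem (x0 x : T) (s : seq T) m :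
  sorted leT s -> m < count_mem x s -> nth x0 s (index x s + m) = x.
Proof.
elim: s m => [|y s IHs] m //= s_sorted.
have {}IHs := IHs _ (path_sorted s_sorted).
case: (eqVneq y x) => [eq_yx | _] /=; last by rewrite add0n; exact: IHs.
subst y; rewrite add0n add1n; case: m => [|m] //=; rewrite ltnS => m_lt.
suff index_x : index x s = 0 by move: (IHs m m_lt); rewrite index_x.
have : x \in s by rewrite -has_pred1 has_count (leq_ltn_trans _ m_lt).
case: s s_sorted {IHs m_lt} => [|z s] //= /andP[le_xz z_path].
rewrite inE => /predU1P[-> | x_in_s]; first by rewrite eqxx.
have le_zx : leT z x := allP (order_path_min leT_tr z_path) x x_in_s.
suff -> : x = z by rewrite eqxx.
by apply: leT_anti; rewrite le_xz le_zx.
Qed.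

End SortedBlock.

Lemma geq_anti : antisymmetric geq.
Proof. by move=> m n le_nm_mn; apply/anti_leq; rewrite andbC. Qed.

Lemma part_antitone (s : seq nat) (i j : nat) :
  sorted geq s -> i <= j -> part s j <= part s i.
Proof.
rewrite /part => s_sorted le_ij.
have [lt_j_size | ge_j_size] := ltnP j.-1 (size s); last by rewrite nth_default.
have le_pred : i.-1 <= j.-1 by rewrite -!subn1 leq_sub2r.
apply: (sorted_leq_nth (rev_trans leq_trans) leqnn) => //.
exact: leq_ltn_trans le_pred lt_j_size.
Qed.

Lemma kpart_le_size (s : seq nat) : kpart s <= size s.
Proof. by apply/bigmax_leqP => i _; exact: ltn_ord. Qed.

Lemma kpart_le_part (s : seq nat) i :
  sorted geq s -> 0 < i <= kpart s -> i <= part s i.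
Proof.
move=> s_sorted /andP[i_gt0 le_ik]; rewrite leqNgt; apply/negP => lt_part_i.
suff : kpart s <= i.-1 by rewrite leqNgt prednK ?ltnS ?le_ik.
apply/bigmax_leqP => j le_j_part; rewrite leqNgt; apply/negP => lt_i_j.
have le_i_j : i <= j.+1 by rewrite -(prednK i_gt0).
have := part_antitone s_sorted le_i_j; lia.
Qed.

Lemma conj_part_self_conjugate (s : seq nat) i :
  self_conjugate s -> 0 < i <= size s -> conj_part s i = part s i.
Proof.
move=> /eqP s_sc /andP[i_gt0 le_i_size].
have size_head : size s = head 0 s by rewrite -{1}s_sc size_mkseq.
by rewrite /part -{2}s_sc nth_mkseq ?prednK // -size_head.
Qed.

Lemma hook_diag_self_conjugate (s : seq nat) i :
  self_conjugate s -> 0 < i <= size s -> i <= part s i ->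
  hook s i i = (part s i - i).*2.+1.
Proof. by move=> s_sc i_range le_i_part; rewrite /hook conj_part_self_conjugate //; lia. Qed.

Lemma part_take_index_count_mem (s : seq nat) k x i :
  sorted geq s -> 0 < x ->
  index x (take k s) < i <= index x (take k s) + count_mem x (take k s) ->
  i <= k /\ part s i = x.
Proof.
set t := take k s; set a := index x t => s_sorted x_gt0 i_range.
have lt_m_count : i.-1 - a < count_mem x t by lia.
have := nth_index_count_mem (rev_trans leq_trans) geq_anti 0
          (take_sorted k s_sorted) lt_m_count.
have -> : a + (i.-1 - a) = i.-1 by lia.
move=> nth_t; have lt_i_t : i.-1 < size t.
  rewrite ltnNge; apply/negP => /(nth_default 0).
  by rewrite nth_t => x_eq0; rewrite x_eq0 in x_gt0.
have le_ik : i <= k by move: lt_i_t; rewrite size_take; case: ifP; lia.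
by split; rewrite // /part -nth_t nth_take //; lia.
Qed.

(* The witness is the y in the window with y = (p - 1)/2 modulo p. *)
Lemma odd_window_dvdn_odd (p L : nat) :
  odd p -> exists2 y, L <= y < L + p & p %| y.*2.+1.
Proof.
move=> p_odd; set h := p./2.
have p_eq : p = h.*2.+1 by rewrite -[LHS]odd_double_half p_odd.
have L_eq := divn_eq L p; set q := L %/ p in L_eq; set r := L %% p in L_eq.
have lt_r_p : r < p by rewrite ltn_mod p_eq.
have [le_r_h | lt_h_r] := leqP r h.
- exists (q * p + h); first lia.
  by apply/dvdnP; exists q.*2.+1; nia.
- exists (q.+1 * p + h); first lia.
  by apply/dvdnP; exists q.*2.+3; nia.
Qed.

Theorem lemma3p18 (p : nat) (lam : seq nat) :
  prime p -> odd p -> BG_partition p lam ->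
  p_regular p (take (kpart lam) lam).
Proof.
move=> p_prime p_odd [/andP[lam_sorted _] [lam_sc lam_hook]] x x_gt0.
set k := kpart lam; set t := take k lam.
rewrite ltnNge; apply/negP => p_le_count.
set a := index x t.
have block i : a < i <= a + p -> i <= k /\ part lam i = x.
  by move=> i_range; apply: part_take_index_count_mem => //; rewrite -/t -/a; lia.
have p_gt0 := prime_gt0 p_prime.
have le_ap_x : a + p <= x.
  have [le_apk part_last] := block (a + p) ltac:(lia).
  by rewrite -[in X in _ <= X]part_last kpart_le_part // le_apk; lia.
have [y y_window p_dvd] := odd_window_dvdn_odd (x - a - p) p_odd.
have [le_ik part_i] := block (x - y) ltac:(lia).
have le_k_size : k <= size lam := kpart_le_size lam.
have hook_i : hook lam (x - y) (x - y) = y.*2.+1.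
  by rewrite hook_diag_self_conjugate ?part_i ?subKn //; lia.
have i_range : 0 < x - y <= k by lia.
by have := lam_hook (x - y) i_range; rewrite hook_i p_dvd.
Qed.
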